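(* Let $P\subset\mathbb{R}^d$ be a full-dimensional lattice polytope with codegree $a$ satisfying $P=\lfloor aP\rfloor+\{P\}$. Then $aP=\lfloor aP\rfloor+\{aP\}$. Moreover, $\{aP\}=(a-1)P+\{P\}$.
   Context: $P$ has facet presentation $P=\{x: n_F(x)\ge -h_F\ \forall \text{ facets } F\}$ with $n_F\in(\mathbb{Z}^d)^*$ primitive inner normals and $h_F\in\mathbb{Z}$. The codegree of a lattice polytope $Q$ is $a_Q=\min\{k\in\mathbb{Z}_{\ge1}: \mathrm{int}(kQ)\cap\mathbb{Z}^d\ne\varnothing\}$; $a=a_P$. For a lattice polytope $Q$, $\lfloor Q\rfloor=\mathrm{conv}(\mathrm{int}(Q)\cap\mathbb{Z}^d)$, and the remainder polytope of $Q$, with facet presentation $Q=\{x: n_G(x)\ge -g_G\}$ (primitive inner normals, integer heights), is $\{Q\}=\mathrm{conv}\{x\in\mathbb{Z}^d: n_G(x)\ge (a_Q-1)g_G-1\ \forall \text{ facets } G\}$. In particular $aP$ has codegree $1$ and facet heights $ah_F$, so $\{aP\}=\mathrm{conv}\{x\in\mathbb{Z}^d: n_F(x)\ge -1\ \forall F\}$. $+$ is Minkowski sum and $0\cdot P=\{0\}$. *)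

From HB Require Import structures.
From mathcomp Require Import all_boot all_order all_algebra.
From mathcomp Require Import boolp classical_sets reals.
Set Implicit Arguments. Unset Strict Implicit. Unset Printing Implicit Defensive.
Import Order.TTheory GRing.Theory Num.Theory.
Local Open Scope classical_set_scope.
Local Open Scope ring_scope.

Section Polytopes.
Variables (R : realType) (d : nat).
Notation V := 'rV[R]_d.

Definition lattice_pt (x : V) : Prop := forall i : 'I_d, x 0 i \is a Num.int.

Definition conv (S : set V) : set V :=
  [set x | exists (n : nat) (p : 'I_n -> V) (w : 'I_n -> R),
      (forall k, S (p k)) /\ (forall k, 0 <= w k) /\ \sum_(k < n) w k = 1 /\
      x = \sum_(k < n) w k *: p k].

Definition msum (A B : set V) : set V := [set a + b | a in A & b in B].
Definition dil (k : R) (A : set V) : set V := [set k *: a | a in A].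

(* topological interior in R^d (sup-norm balls, giving the standard topology) *)
Definition interior_pts (A : set V) : set V :=
  [set x | exists2 e : R, 0 < e &
     forall y : V, (forall i, `|y 0 i - x 0 i| < e) -> A y].

Definition lattice_polytope (P : set V) : Prop :=
  exists s : seq V, (forall v, v \in s -> lattice_pt v) /\ P = conv [set v | v \in s].

Definition full_dimensional (P : set V) : Prop := interior_pts P !=set0.

Definition ev (n : 'rV[int]_d) (x : V) : R := \sum_(i < d) (n 0 i)%:~R * x 0 i.

Definition primitive (n : 'rV[int]_d) : Prop :=
  \big[gcdn/0%N]_(i < d) `|n ord0 i|%N = 1%N.

Definition hsets (F : seq ('rV[int]_d * int)) : set V :=
  [set x | forall nh, nh \in F -> ev nh.1 x >= - (nh.2)%:~R].

(* F is the facet presentation of P: primitive inner normals, integer heights,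
   P is the intersection of the half-spaces, and no inequality is redundant
   (for a full-dimensional polytope this is exactly the facet presentation). *)
Definition facet_presentation (P : set V) (F : seq ('rV[int]_d * int)) : Prop :=
  [/\ forall nh, nh \in F -> primitive nh.1,
      P = hsets F &
      forall nh, nh \in F -> hsets (rem nh F) != P].

Definition is_codegree (Q : set V) (a : nat) : Prop :=
  [/\ (1 <= a)%N,
      exists x, interior_pts (dil a%:R Q) x /\ lattice_pt x &
      forall k : nat, (1 <= k)%N -> (k < a)%N ->
        forall x, interior_pts (dil k%:R Q) x -> ~ lattice_pt x].

Definition lfloor (Q : set V) : set V :=
  conv [set x | interior_pts Q x /\ lattice_pt x].

(* remainder polytope of Q, given the facet presentation G of Q and its codegree aQ *)
Definition remainder (G : seq ('rV[int]_d * int)) (aQ : nat) : set V :=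
  conv [set x | lattice_pt x /\
     forall ng, ng \in G -> ev ng.1 x >= ((aQ%:Z - 1) * ng.2 - 1)%:~R].

(* facet presentation of kP from that of P: heights multiplied by k *)
Definition scale_pres (k : nat) (F : seq ('rV[int]_d * int)) :=
  [seq (nh.1, k%:Z * nh.2) | nh <- F].

End Polytopes.

From HB Require Import structures.
From mathcomp Require Import all_boot all_order all_algebra.
From mathcomp Require Import boolp classical_sets reals.
From mathcomp Require Import ring lra zify.
Set Implicit Arguments. Unset Strict Implicit. Unset Printing Implicit Defensive.
Import Order.TTheory GRing.Theory Num.Theory.
Local Open Scope classical_set_scope.
Local Open Scope ring_scope.

(* Write A := aP, T for the set of interior lattice points of A (so that
   floor(A) = conv T) and Q := (a-1)P + {P}.  An interior lattice point of A
   has slack at least 1 on every facet of A, while {aP} is spanned by lattice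
   points of slack at least -1, so floor(A) + {aP} is contained in A.  Checking
   on lattice generators gives Q <= {aP}, and the hypothesis P = floor(A) + {P}
   gives A = P + (a-1)P <= floor(A) + Q.  This proves A = floor(A) + {aP}, and
   also floor(A) + {aP} <= floor(A) + Q.  Since T is finite, floor(A) can be
   cancelled from the last inclusion: the generators of conv T are eliminated
   one at a time, each being rewritten through the others.  Hence {aP} <= Q. *)

Section Convexity.
Variables (R : realType) (d : nat).
Notation V := 'rV[R]_d.

Definition convex (C : set V) := forall (x y : V) (t : R), 0 <= t -> t <= 1 ->
  C x -> C y -> C (t *: x + (1 - t) *: y).

Lemma subset_conv (A : set V) : A `<=` conv A.
Proof.
move=> x Ax; exists 1%N, (fun _ => x), (fun _ => 1).
by split=> //; split=> [_|]; rewrite ?ler01 // !big_ord1 scale1r.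
Qed.

Lemma convex_conv (A : set V) : convex (conv A).
Proof.
move=> x y t t0 t1 [n [p [w [Ap [w_ge0 [w1 ->]]]]]] [m [q [u [Aq [u_ge0 [u1 ->]]]]]].
pose pq k := match split k with inl i => p i | inr j => q j end.
pose wu k := match split k with inl i => t * w i | inr j => (1 - t) * u j end.
exists (n + m)%N, pq, wu; split; first by move=> k; rewrite /pq; case: split.
split; first by move=> k; rewrite /wu; case: split => i;
  apply: mulr_ge0 => //; rewrite subr_ge0.
rewrite !big_split_ord /= /pq /wu.
under eq_bigr do rewrite (unsplitK (inl _)).
under [X in _ + X]eq_bigr do rewrite (unsplitK (inr _)).
split; first by rewrite -!mulr_sumr w1 u1 !mulr1 addrC subrK.
symmetry; under eq_bigr do rewrite (unsplitK (inl _)).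
under [X in _ + X]eq_bigr do rewrite (unsplitK (inr _)).
by rewrite !scaler_sumr; congr (_ + _); apply: eq_bigr => i _; rewrite scalerA.
Qed.

Lemma conv_sub_convex (A C : set V) : convex C -> A `<=` C -> conv A `<=` C.
Proof.
move=> cC AC x [n [p [w [Ap [w_ge0 [w1 ->]]]]]].
elim: n p w Ap w_ge0 w1 => [|n IH] p w Ap w_ge0 w1.
  by move: w1; rewrite big_ord0 => /eqP; rewrite eq_sym oner_eq0.
rewrite big_ord_recr /=; rewrite big_ord_recr /= in w1.
set s := \sum_(i < n) w (widen_ord (leqnSn n) i) in w1 *.
have s_ge0 : 0 <= s by apply: sumr_ge0.
have [s0|s_neq0] := eqVneq s 0.
  have w0 (i : 'I_n) : w (widen_ord (leqnSn n) i) = 0.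
    exact: (psumr_eq0P (P := xpredT) (F := fun j => w (widen_ord _ j))).
  under eq_bigr do rewrite w0 scale0r.
  move: w1; rewrite big1 // s0 !add0r => ->; rewrite scale1r; exact/AC/Ap.
have s_gt0 : 0 < s by rewrite lt_def s_neq0.
have -> : \sum_(i < n) w (widen_ord (leqnSn n) i) *: p (widen_ord (leqnSn n) i)
   = s *: \sum_(i < n) (w (widen_ord (leqnSn n) i) / s) *: p (widen_ord (leqnSn n) i).
  by rewrite scaler_sumr; apply: eq_bigr => i _; rewrite scalerA mulrC divfK.
rewrite (_ : w ord_max = 1 - s); last by rewrite -w1 addrAC subrr add0r.
apply: cC; [by [] | by rewrite -w1 lerDl | | exact/AC/Ap].
apply: IH => [k|k|]; [exact: Ap | exact: divr_ge0 | by rewrite -mulr_suml mulfV].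
Qed.

Lemma convex_affine_preimage (C : set V) c u :
  convex C -> convex [set y | C (c *: y + u)].
Proof.
move=> cC x y t t0 t1 /= Cx Cy.
have -> : c *: (t *: x + (1 - t) *: y) + u
        = t *: (c *: x + u) + (1 - t) *: (c *: y + u).
  by apply/rowP => i; rewrite !mxE; ring.
exact: cC.
Qed.

Lemma conv_sub_convex2 (A B C : set V) (c : R) x y : convex C ->
  conv A x -> conv B y -> (forall x y, A x -> B y -> C (c *: x + y)) ->
  C (c *: x + y).
Proof.
move=> cC Ax By ABC.
suff : conv A `<=` [set x | C (c *: x + y)] by apply.
apply: conv_sub_convex; first exact: convex_affine_preimage.
move=> x' Ax' /=; rewrite -[y]scale1r addrC.
suff : conv B `<=` [set y | C (1 *: y + c *: x')] by apply.
apply: conv_sub_convex; first exact: convex_affine_preimage.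
by move=> y' By' /=; rewrite scale1r addrC; apply: ABC.
Qed.

Lemma convex_msum_dil (A B : set V) (c : R) :
  convex A -> convex B -> convex (msum (dil c A) B).
Proof.
move=> cA cB _ _ t t0 t1 [_ [x1 Ax1 <-] [y1 By1 <-]] [_ [x2 Ax2 <-] [y2 By2 <-]].
exists (c *: (t *: x1 + (1 - t) *: x2)).
  by exists (t *: x1 + (1 - t) *: x2); first exact: cA.
exists (t *: y1 + (1 - t) *: y2); first exact: cB.
by apply/rowP => i; rewrite !mxE; ring.
Qed.

Lemma conv_seq1 (t z : V) : conv [set v | v \in [:: t]] z -> z = t.
Proof.
move=> [n [p [w [Ap [_ [w1 ->]]]]]].
have pt k : p k = t by apply/eqP; rewrite -mem_seq1; exact: Ap.
by under eq_bigr => k _ do rewrite pt; rewrite -scaler_suml w1 scale1r.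
Qed.

Lemma conv_cons (t0 : V) (L : seq V) z : L != [::] ->
  conv [set v | v \in t0 :: L] z ->
  exists mu y, [/\ 0 <= mu, mu <= 1, conv [set v | v \in L] y &
                  z = mu *: t0 + (1 - mu) *: y].
Proof.
case: L => [//|q L] _ [n [p [w [Ap [w_ge0 [w1 ->]]]]]].
pose wr k := if p k == t0 then 0 else w k.
pose p' k := if p k == t0 then q else p k.
set lam := \sum_(k < n) (if p k == t0 then w k else 0).
set rest := \sum_(k < n) wr k.
have wr_ge0 k : 0 <= wr k by rewrite /wr; case: ifP.
have rest_ge0 : 0 <= rest by apply: sumr_ge0.
have lam_rest : lam + rest = 1.
  rewrite /lam /rest -w1 -big_split; apply: eq_bigr => k _ /=.
  by rewrite /wr; case: ifP; rewrite ?addr0 ?add0r.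
have sumE : \sum_(k < n) w k *: p k = lam *: t0 + \sum_(k < n) wr k *: p' k.
  rewrite /lam scaler_suml -big_split; apply: eq_bigr => k _ /=; rewrite /wr /p'.
  by case: ifP => [/eqP->|_]; rewrite ?scale0r ?addr0 ?add0r.
have [rest0|rest_neq0] := eqVneq rest 0.
  exists 1, q; split=> //; first exact/subset_conv/mem_head.
  rewrite sumE subrr scale0r addr0 -lam_rest rest0 addr0 big1 ?addr0 // => k _.
  have -> : wr k = 0.
    exact: (psumr_eq0P (P := xpredT) (F := wr)).
  by rewrite scale0r.
exists lam, (\sum_(k < n) (wr k / rest) *: p' k); split.
- by apply: sumr_ge0 => k _; case: ifP.
- by rewrite -lam_rest lerDl.
- exists n, p', (fun k => wr k / rest); split.
    move=> k; rewrite /p'; case: ifP => [_|/negbT pt0]; first exact: mem_head.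
    by have := Ap k; rewrite /= inE (negbTE pt0).
  by split=> [k|]; [exact: divr_ge0 | rewrite -mulr_suml mulfV].
- rewrite sumE (_ : 1 - lam = rest); last by rewrite -lam_rest addrC addKr.
  rewrite scaler_sumr; congr (_ + _); apply: eq_bigr => k _.
  by rewrite scalerA mulrC divfK.
Qed.

Lemma conv_cancel_subst (t0 y0 b c0 t y c : V) (al0 lam al mu : R) :
  lam != 1 -> al + mu * (al0 / (1 - lam)) != 0 ->
  t0 + al0 *: b = lam *: t0 + (1 - lam) *: y0 + al0 *: c0 ->
  t + al *: b = mu *: t0 + (1 - mu) *: y + al *: c ->
  let al' := al + mu * (al0 / (1 - lam)) in
  t + al' *: b = mu *: y0 + (1 - mu) *: y +
                 al' *: ((al / al') *: c + (1 - al / al') *: c0).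
Proof.
move=> lam1 al'_neq0 e0 e al'; apply/rowP => i.
have := congr1 (fun v : V => v 0 i) e0; have := congr1 (fun v : V => v 0 i) e.
rewrite /al' !mxE => ei e0i.
have lam1' : 1 - lam != 0 by rewrite subr_eq0 eq_sym.
(* The first equation gives t0 = y0 + al0 / (1 - lam) *: (c0 - b); substituting
   this into the second one eliminates t0. *)
have t0E : t0 0 i = y0 0 i + al0 / (1 - lam) * (c0 0 i - b 0 i).
  apply: (mulfI lam1'); rewrite mulrDr mulrA mulrCA divff // mulr1; lra.
have tE : t 0 i = mu * t0 0 i + (1 - mu) * y 0 i + al * c 0 i - al * b 0 i by lra.
rewrite tE t0E; field.
rewrite lam1' /=.
have -> : al * (1 - lam) + mu * al0 = (1 - lam) * (al + mu * (al0 / (1 - lam))).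
  by field.
by rewrite mulf_neq0.
Qed.

Lemma conv_cancel (C : set V) (b : V) (L : seq V) : convex C -> L != [::] ->
  (forall t, t \in L -> exists2 al, 0 < al &
     exists2 z, conv [set v | v \in L] z &
     exists2 c, C c & t + al *: b = z + al *: c) ->
  C b.
Proof.
move=> cC; elim: L => [//|t0 L IH] _ H.
have [al0 al0_gt0 [z0 z0L [c0 c0C e0]]] := H t0 (mem_head _ _).
have b_c0 : t0 + al0 *: b = t0 + al0 *: c0 -> C b.
  by move=> /addrI /(scalerI (lt0r_neq0 al0_gt0)) ->.
have [L0 | L_neq0] := eqVneq L [::].
  by move: z0L; rewrite L0 => /conv_seq1 z0E; apply: b_c0; rewrite e0 z0E.
have [lam [y0 [_ lam_le1 y0L z0E]]] := conv_cons L_neq0 z0L.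
rewrite {}z0E in e0.
have [lam1|lam_neq1] := eqVneq lam 1.
  by apply: b_c0; rewrite e0 lam1 scale1r subrr scale0r addr0.
apply: IH => // t tL.
have [al al_gt0 [z zL [c Cc e]]] := H t (@mem_behead _ (t0 :: L) _ tL).
have [mu [y [mu_ge0 mu_le1 yL zE]]] := conv_cons L_neq0 zL.
rewrite {}zE in e.
pose al' := al + mu * (al0 / (1 - lam)).
have al'_gt0 : 0 < al'.
  apply: ltr_wpDr => //; apply: mulr_ge0 => //.
  by rewrite divr_ge0 ?subr_ge0 // ltW.
exists al' => //; exists (mu *: y0 + (1 - mu) *: y); first exact: convex_conv.
exists ((al / al') *: c + (1 - al / al') *: c0).
  apply: cC => //; first by rewrite divr_ge0 // ltW.
  by rewrite ler_pdivrMr // mul1r lerDl mulr_ge0 ?divr_ge0 ?subr_ge0 // ltW.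
exact: (conv_cancel_subst lam_neq1 (lt0r_neq0 al'_gt0) e0 e).
Qed.

Lemma msum_conv_cancel (L : seq V) (X C : set V) : convex C -> L != [::] ->
  msum (conv [set v | v \in L]) X `<=` msum (conv [set v | v \in L]) C ->
  X `<=` C.
Proof.
move=> cC L_neq0 LXC x Xx; apply: (conv_cancel cC L_neq0) => t tL.
have [z zL [c Cc ezc]] : msum (conv [set v | v \in L]) C (t + x).
  by apply: LXC; exists t; [exact: subset_conv | exists x].
by exists 1 => //; exists z => //; exists c; rewrite // !scale1r.
Qed.

End Convexity.

Section LatticePoints.
Variables (R : realType) (d : nat).
Notation V := 'rV[R]_d.

Lemma evD (n : 'rV[int]_d) (x y : V) : ev n (x + y) = ev n x + ev n y.
Proof. by rewrite /ev -big_split; apply: eq_bigr => i _; rewrite mxE mulrDr. Qed.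

Lemma evZ (n : 'rV[int]_d) c (x : V) : ev n (c *: x) = c * ev n x.
Proof. by rewrite /ev mulr_sumr; apply: eq_bigr => i _; rewrite mxE mulrCA. Qed.

Lemma ev_delta_mx (n : 'rV[int]_d) j : ev n (delta_mx 0 j : V) = (n 0 j)%:~R.
Proof.
rewrite /ev (bigD1 j) //= big1 ?addr0; first by rewrite mxE !eqxx mulr1.
by move=> i ij; rewrite mxE (negbTE ij) andbF mulr0.
Qed.

Lemma latticeD (x y : V) : lattice_pt x -> lattice_pt y -> lattice_pt (x + y).
Proof. by move=> Lx Ly i; rewrite mxE; apply: rpredD. Qed.

Lemma lattice_scale_nat (k : nat) (x : V) : lattice_pt x -> lattice_pt (k%:R *: x).
Proof. by move=> Lx i; rewrite mxE; apply: rpredM => //; apply: natr_int. Qed.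

Lemma ev_lattice_int (n : 'rV[int]_d) (x : V) : lattice_pt x -> ev n x \is a Num.int.
Proof.
by move=> Lx; apply: rpred_sum => i _; apply: rpredM; [apply: intr_int | apply: Lx].
Qed.

Lemma int_ltr_leD1 (x : R) (c : int) : x \is a Num.int -> c%:~R < x -> (c + 1)%:~R <= x.
Proof. by move=> /intrP [m ->]; rewrite ltr_int ler_int lezD1. Qed.

Lemma convex_hsets (F : seq ('rV[int]_d * int)) : convex (hsets (R:=R) F).
Proof.
move=> x y t t0 t1 Fx Fy nh nhF; have t1' : 0 <= 1 - t by rewrite subr_ge0.
rewrite evD !evZ; have := ler_wpM2l t0 (Fx _ nhF); have := ler_wpM2l t1' (Fy _ nhF).
lra.
Qed.

Lemma dil_hsets (k : nat) (F : seq ('rV[int]_d * int)) : (0 < k)%N ->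
  dil k%:R (hsets (R:=R) F) = hsets (scale_pres k F).
Proof.
move=> k_gt0; have k_pos : (0 : R) < k%:R by rewrite ltr0n.
apply/seteqP; split=> [_ [x Fx <-] _ /mapP [nh nhF ->] | y Fy] /=.
  by rewrite evZ intrM -mulrN ler_pM2l //; apply: Fx.
exists (k%:R^-1 *: y); last by rewrite scalerA mulfV ?scale1r // gt_eqF.
move=> nh nhF; rewrite evZ -(ler_pM2l k_pos) mulrA mulfV ?gt_eqF // mul1r.
by have := Fy _ (map_f (fun nh => (nh.1, k%:Z * nh.2)) nhF); rewrite /= intrM mulrN.
Qed.

Lemma primitive_neq0 (n : 'rV[int]_d) : primitive n -> exists j, n 0 j != 0.
Proof.
rewrite /primitive; case: (pickP (fun j => n 0 j != 0)) => [j nj|n0]; first by exists j.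
by rewrite big1 // => i _; move: (n0 i) => /negbFE/eqP; rewrite (_ : ord0 = 0) // => ->.
Qed.

Lemma interior_pts_subset (A : set V) : interior_pts A `<=` A.
Proof. by move=> x [e e_gt0 Ae]; apply: Ae => i; rewrite subrr normr0. Qed.

Lemma interior_ev_gt (A : set V) (n : 'rV[int]_d) (c : R) (w : V) :
  (forall y, A y -> c <= ev n y) -> (exists j, n 0 j != 0) ->
  interior_pts A w -> c < ev n w.
Proof.
move=> An [j nj] [e e_gt0 Ae].
pose s := Num.sg ((n 0 j)%:~R : R).
(* Stepping from w against the sign of n_j along the j-th axis stays in A
   and lowers the value of n by (e/2)|n_j|. *)
have Aw' : A (w - (e / 2 * s) *: delta_mx 0 j).
  apply: Ae => i; rewrite !mxE addrAC subrr add0r normrN normrM normrM normr_sg.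
  rewrite ger0_norm ?divr_ge0 ?ltW //.
  by case: (i == j); case: (_ != 0); rewrite /= ?normr1 ?normr0 ?mulr1 ?mulr0; lra.
have := An _ Aw'; rewrite evD -scaleNr evZ ev_delta_mx mulNr -!mulrA /s -normrEsg.
have : 0 < e * (2^-1 * `|(n 0 j)%:~R : R|).
  by rewrite !mulr_gt0 ?invr_gt0 ?ltr0n // normr_gt0 intr_eq0.
lra.
Qed.

Lemma interior_lattice_ev_ge (F : seq ('rV[int]_d * int)) (t : V) :
  (forall nh, nh \in F -> primitive nh.1) ->
  interior_pts (hsets F) t -> lattice_pt t ->
  forall nh, nh \in F -> (- nh.2 + 1)%:~R <= ev nh.1 t.
Proof.
move=> Fprim Ft Lt nh nhF; apply: int_ltr_leD1; first exact: ev_lattice_int.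
rewrite intrN; apply: interior_ev_gt Ft; last exact/primitive_neq0/Fprim.
by move=> y; apply.
Qed.

End LatticePoints.

Section Finiteness.
Variables (R : realType) (d : nat).
Notation V := 'rV[R]_d.

Lemma conv_seq_bounded (s : seq V) :
  exists r : R, forall y, conv [set v | v \in s] y -> forall i, `|y 0 i| <= r.
Proof.
exists (\sum_(v <- s) \sum_(j < d) `|v 0 j|).
apply: conv_sub_convex => [x y t t0 t1 /= xr yr i | v /= vs i].
  have t1' : 0 <= 1 - t by rewrite subr_ge0.
  rewrite !mxE (le_trans (ler_normD _ _)) // !normrM (ger0_norm t0) (ger0_norm t1').
  have := ler_wpM2l t0 (xr i); have := ler_wpM2l t1' (yr i); lra.
rewrite (big_rem v vs) /= -[leLHS]addr0 lerD ?sumr_ge0 // => [|w _].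
  by rewrite (bigD1 i) //= lerDl sumr_ge0.
exact: sumr_ge0.
Qed.

Lemma bounded_lattice_enum (A : set V) (r : R) :
  (forall y, A y -> forall i, `|y 0 i| <= r) ->
  exists L : seq V, [set v | v \in L] = [set v | A v /\ lattice_pt v].
Proof.
move=> Ar; pose M := Num.Def.archi_bound `|r|.
pose box := [seq \row_i ((((f : {ffun 'I_d -> 'I_(2 * M).+1}) i : nat)%:R : R) - M%:R)
            | f <- enum {ffun 'I_d -> 'I_(2 * M).+1}].
exists [seq v <- box | `[< A v >]]; apply/seteqP; split=> v /=.
  rewrite mem_filter => /andP [/asboolW Av /mapP [f _ vE]]; split=> // i.
  by rewrite vE mxE; apply: rpredB; apply: natr_int.
move=> [Av Lv]; rewrite mem_filter asboolT //=.
pose m i := Num.floor (v 0 i).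
have vm i : v 0 i = (m i)%:~R by apply/esym/eqP; rewrite -intrEfloor; exact: Lv.
have m_bound i : (- (M%:Z) <= m i) && (m i <= M%:Z).
  rewrite -ler_norml -(ler_int R) intr_norm -vm.
  apply: le_trans (Ar _ Av i) _; apply: le_trans (ler_norm r) _.
  exact/ltW/archi_boundP.
pose k i := absz (m i + M%:Z).
have k_lt i : (k i < (2 * M).+1)%N by have /andP [] := m_bound i; rewrite /k; lia.
apply/mapP; exists [ffun i => inord (k i)]; first by rewrite mem_enum.
apply/rowP => i; rewrite !mxE ffunE inordK // /k natr_absz ger0_norm.
  by rewrite intrD vm addrK.
by have /andP [] := m_bound i; lia.
Qed.

Lemma interior_lattice_enum (s : seq V) (c : R) :
  exists L : seq V, [set v | v \in L] =
    [set x | interior_pts (dil c (conv [set v | v \in s])) x /\ lattice_pt x].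
Proof.
have [r sr] := conv_seq_bounded s.
apply: (bounded_lattice_enum (r := `|c| * r)) => y /interior_pts_subset [x sx <-] i.
by rewrite mxE normrM ler_wpM2l // sr.
Qed.

End Finiteness.

Section Remainders.
Variables (R : realType) (d : nat).
Notation V := 'rV[R]_d.

Lemma msum_lfloor_remainder1_sub (G : seq ('rV[int]_d * int)) :
  (forall ng, ng \in G -> primitive ng.1) ->
  msum (lfloor (hsets G)) (remainder G 1) `<=` hsets (R:=R) G.
Proof.
move=> Gprim _ [t floor_t [k rem_k <-]]; rewrite -[t]scale1r.
apply: (conv_sub_convex2 (@convex_hsets _ _ G) floor_t rem_k).
move=> x y [Gx Lx] [_ Gy] ng ngG.
have := interior_lattice_ev_ge Gprim Gx Lx ngG; have := Gy _ ngG.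
rewrite scale1r evD subrr mul0r sub0r intrD intrN; lra.
Qed.

Lemma dil_msum_remainder_sub (s : seq V) (F : seq ('rV[int]_d * int)) (a : nat) :
  (forall v, v \in s -> lattice_pt v) -> conv [set v | v \in s] `<=` hsets F ->
  (0 < a)%N ->
  msum (dil (a - 1)%:R (conv [set v | v \in s])) (remainder F a)
    `<=` remainder (scale_pres a F) 1.
Proof.
move=> Ls sF a_gt0 _ [_ [p s_p <-] [r rem_r <-]].
apply: (conv_sub_convex2 _ s_p rem_r) => [|v g vs [Lg Fg]]; first exact: convex_conv.
apply: subset_conv; split; first by apply: latticeD => //; apply/lattice_scale_nat/Ls.
move=> _ /mapP [nh nhF ->] /=.
have := ler_wpM2l (ler0n _ (a - 1)) (sF v (subset_conv vs) nh nhF).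
have := Fg nh nhF; rewrite subrr mul0r sub0r evD evZ natrB //.
rewrite !(intrD, intrM, intrN) mulr1z pmulrn; lra.
Qed.

Lemma dil_sub_msum (X Z W : set V) (a : nat) : (0 < a)%N -> X = msum Z W ->
  dil a%:R X `<=` msum Z (msum (dil (a - 1)%:R X) W).
Proof.
move=> a_gt0 XE _ [p Xp <-]; have := Xp; rewrite {1}XE => -[z Zz [w Ww pE]].
exists z => //; exists ((a - 1)%:R *: p + w).
  by exists ((a - 1)%:R *: p); [exists p | exists w].
by rewrite addrCA pE natrB // scalerBl scale1r subrK.
Qed.

End Remainders.

Theorem lemma3p17 (R : realType) (d : nat) (P : set 'rV[R]_d)
    (F : seq ('rV[int]_d * int)) (a : nat) :
  lattice_polytope P -> full_dimensional P ->
  facet_presentation P F -> is_codegree P a ->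
  P = msum (lfloor (dil a%:R P)) (remainder F a) ->
  dil a%:R P = msum (lfloor (dil a%:R P)) (remainder (scale_pres a F) 1) /\
  remainder (scale_pres a F) 1 = msum (dil (a - 1)%:R P) (remainder F a).
Proof.
move=> [s [Ls Ps]] _ [Fprim PF _] [a_gt0 [x0 [Ax0 Lx0]] _] P_floor.
have aF_prim ng : ng \in scale_pres a F -> primitive ng.1.
  by move=> /mapP [nh /Fprim ? ->].
have floor_rem_sub : msum (lfloor (dil a%:R P)) (remainder (scale_pres a F) 1)
    `<=` dil a%:R P.
  by rewrite PF dil_hsets //; apply: msum_lfloor_remainder1_sub.
have aP_sub := dil_sub_msum a_gt0 P_floor.
have rem_sub :
    msum (dil (a - 1)%:R P) (remainder F a) `<=` remainder (scale_pres a F) 1.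
  by rewrite Ps; apply: dil_msum_remainder_sub => //; rewrite -Ps PF.
split.
  apply/seteqP; split=> // y /aP_sub [z floor_z [q Qq <-]].
  by exists z => //; exists q => //; apply: rem_sub.
apply/seteqP; split=> //.
have [L LE] := interior_lattice_enum s a%:R; rewrite -Ps in LE.
have x0L : [set v | v \in L] x0 by rewrite LE.
have L_neq0 : L != [::] by apply/eqP => L0; move: x0L; rewrite L0.
apply: (msum_conv_cancel _ L_neq0).
  by rewrite Ps; apply: convex_msum_dil; apply: convex_conv.
by rewrite LE => y /floor_rem_sub /aP_sub.
Qed.
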